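(* Consider the one-hidden-layer network with scalar input $u^{\mathrm{NN}}(x;\theta)=\frac{1}{\sqrt m}\sum_{i=1}^mW^1_i\sigma(W^0_ix)$, $x\in\mathbb{R}$, $\theta=(W^0,W^1)\in\mathbb{R}^m\times\mathbb{R}^m$, with initialization $\theta_0=(W^0(0),W^1(0))$ having i.i.d. entries of mean $0$, variance $1$ and finite moments of all orders. Let $T\subset\mathbb{R}$ be a convex compact set, $k\geq1$ an integer, and let $\sigma$ satisfy the activation assumption below for $k+2$. Then for any $\delta>0$ there exist functions $B(m)$ with $B(m)\to\infty$ as $m\to\infty$ and $\eta(\varepsilon)$ such that, with probability at least $1-\delta$ over the initialization, for every $\varepsilon>0$, $$\sup_{x\in T}\Big\|\nabla_\theta\frac{d^ku^{\mathrm{NN}}}{dx^k}(x;\theta)-\nabla_\theta\frac{d^ku^{\mathrm{NN}}}{dx^k}(x;\theta_0)\Big\|_2\leq\varepsilon$$ for all $W^0,W^1$ satisfying $\|W^0-W^0(0)\|_2,\|W^1-W^1(0)\|_2\leq B(m)\eta(\varepsilon)$.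
   Context: Activation assumption for an integer $k$: $\sigma\in C^k(\mathbb{R})$ and there are positive constants $l_1,\dots,l_k$ with $\sup_x|\sigma^{(j)}(x)|/(1+|x|^{l_j})<\infty$, $j=1,\dots,k$. *)

From HB Require Import structures.
From mathcomp Require Import all_boot all_order all_algebra.
From mathcomp Require Import all_classical all_reals all_analysis.
Set Implicit Arguments. Unset Strict Implicit. Unset Printing Implicit Defensive.
Import Order.TTheory GRing.Theory Num.Theory.
Import numFieldNormedType.Exports.
Local Open Scope classical_set_scope.
Local Open Scope ring_scope.

Section defs.
Variable R : realType.

Definition convex_R (T : set R) : Prop :=
  forall x y t, T x -> T y -> 0 <= t -> t <= 1 -> T (t * x + (1 - t) * y).

Definition activation_assumption (k : nat) (sigma : R -> R) : Prop :=
  (forall j, (j < k)%N -> forall x, derivable (derive1n j sigma) x 1) /\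
  continuous (derive1n k sigma) /\
  exists l : nat -> R,
    forall j, (1 <= j <= k)%N ->
      0 < l j /\ exists C : R, forall x,
        `|derive1n j sigma x| <= C * (1 + `|x| `^ l j).

Definition uNN (m : nat) (sigma : R -> R) (W0 W1 : 'I_m -> R) (x : R) : R :=
  (Num.sqrt (m%:R))^-1 * \sum_(i < m) W1 i * sigma (W0 i * x).

Definition dkuNN (k m : nat) (sigma : R -> R) (W0 W1 : 'I_m -> R) (x : R) : R :=
  derive1n k (uNN sigma W0 W1) x.

Definition upd (m : nat) (W : 'I_m -> R) (i : 'I_m) (t : R) : 'I_m -> R :=
  fun j => if j == i then t else W j.

Definition grad0 (k m : nat) (sigma : R -> R) (W0 W1 : 'I_m -> R) (x : R)
    (i : 'I_m) : R :=
  derive1 (fun t => dkuNN k sigma (upd W0 i t) W1 x) (W0 i).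
Definition grad1 (k m : nat) (sigma : R -> R) (W0 W1 : 'I_m -> R) (x : R)
    (i : 'I_m) : R :=
  derive1 (fun t => dkuNN k sigma W0 (upd W1 i t) x) (W1 i).

Definition norm2 (m : nat) (V : 'I_m -> R) : R :=
  Num.sqrt (\sum_(i < m) V i ^+ 2).

Definition grad_diff_norm (k m : nat) (sigma : R -> R)
    (W0 W1 V0 V1 : 'I_m -> R) (x : R) : R :=
  Num.sqrt (\sum_(i < m) (grad0 k sigma W0 W1 x i - grad0 k sigma V0 V1 x i) ^+ 2
          + \sum_(i < m) (grad1 k sigma W0 W1 x i - grad1 k sigma V0 V1 x i) ^+ 2).

Definition mutually_independent d (Omega : measurableType d) (I : eqType)
    (P : probability Omega R) (Z : I -> Omega -> R) : Prop :=
  forall (J : seq I) (B : I -> set R), uniq J ->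
    (forall j, measurable (B j)) ->
    fine (P [set w | forall j, j \in J -> B j (Z j w)]) =
    \prod_(j <- J) fine (P (Z j @^-1` B j)).

Definition identically_distributed d (Omega : measurableType d) (I : Type)
    (P : probability Omega R) (Z : I -> Omega -> R) : Prop :=
  forall i j (B : set R), measurable B -> P (Z i @^-1` B) = P (Z j @^-1` B).

Definition iid_init d (Omega : measurableType d) (I : eqType)
    (P : probability Omega R) (Z : I -> Omega -> R) : Prop :=
  (forall j, measurable_fun setT (Z j)) /\
  mutually_independent P Z /\ identically_distributed P Z /\
  (forall j (p : nat), P.-integrable setT (fun w => ((Z j w) ^+ p)%:E)) /\
  (forall j, (\int[P]_w (Z j w)%:E = 0)%E) /\
  (forall j, (\int[P]_w ((Z j w - fine (\int[P]_v (Z j v)%:E)) ^+ 2)%:E = 1)%E).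

End defs.

(* Write h(a, x) = a^k sigma^(k)(a x). The k-th x-derivative of the network is
   m^(-1/2) sum_i W1_i h(W0_i, x), so the theta-gradient has the coordinates
   m^(-1/2) W1_i dh/da(W0_i, x) and m^(-1/2) h(W0_i, x). While all weights stay in
   [-rho, rho] and x in the bounded set T, the polynomial growth of sigma^(k), ..., sigma^(k+2)
   bounds h, dh/da and d^2h/da^2 by a polynomial in rho, so by the mean value theorem the
   gradient moves by at most m^(-1/2) E (1 + rho)^q r when (W0, W1) moves by r in l2.
   Markov's inequality for the 2(q+2)-th moment and a union bound over the 2m initial
   weights keep them all below 1 + K m^(1/(2(q+2))) with probability at least 1 - delta, and
   then a radius r = B(m) eta with B(m) proportional to m^(1/(2(q+2))) makes
   m^(-1/2) E (1 + rho)^q r at most eta. *)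

From mathcomp Require Import all_boot all_order all_algebra.
From mathcomp Require Import all_classical all_reals all_analysis.
From mathcomp Require Import ring lra zify measurable_realfun.
Import Order.TTheory GRing.Theory Num.Theory.
Import numFieldNormedType.Exports.
Local Open Scope classical_set_scope.
Local Open Scope ring_scope.
Set Implicit Arguments. Unset Strict Implicit. Unset Printing Implicit Defensive.

Section neuron_derivatives.
Variable R : realType.
Implicit Types (sigma : R -> R) (a x : R).

Lemma derive1_val (f : R -> R) x df : is_derive x 1 f df -> derive1 f x = df.
Proof. by move=> fdf; rewrite derive1E derive_val. Qed.

Lemma is_derive_derive1n sigma j x : derivable (derive1n j sigma) x 1 ->
  is_derive x 1 (derive1n j sigma) (derive1n j.+1 sigma x).
Proof. by move=> /derivableP; rewrite derive1nS derive1E. Qed.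

Lemma is_derive_dilate sigma j a x : derivable (derive1n j sigma) (a * x) 1 ->
  is_derive x 1 (fun y => derive1n j sigma (a * y)) (a * derive1n j.+1 sigma (a * x)).
Proof.
move=> /is_derive_derive1n ds; rewrite mulrC.
have da : is_derive x 1 ( *%R a) a by apply: is_derive_eq; rewrite /GRing.scale /= mulr1.
exact: (is_derive1_comp ds da).
Qed.

Lemma is_deriveMl (f : R -> R) c x df :
  is_derive x 1 f df -> is_derive x 1 (fun y => c * f y) (c * df).
Proof. exact: is_deriveZ. Qed.

(* [neuron k sigma a x] is the k-th derivative of x |-> sigma (a * x); [neuron_da] and
   [neuron_daa] below are its first two derivatives in the weight a. *)
Definition neuron k sigma a x := a ^+ k * derive1n k sigma (a * x).

Lemma is_derive_neuron k sigma a x : derivable (derive1n k sigma) (a * x) 1 ->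
  is_derive x 1 (neuron k sigma a) (neuron k.+1 sigma a x).
Proof.
move=> /is_derive_dilate ds; rewrite /neuron.
apply: (is_derive_eq (is_deriveMl (a ^+ k) ds)).
by rewrite exprS; ring.
Qed.

Lemma is_derive_powM_dilate sigma e j a x :
  derivable (derive1n j sigma) (a * x) 1 ->
  is_derive a 1 (fun b => b ^+ e * derive1n j sigma (b * x))
    (e%:R * a ^+ e.-1 * derive1n j sigma (a * x) + a ^+ e * x * derive1n j.+1 sigma (a * x)).
Proof.
rewrite mulrC => /is_derive_dilate ds.
have := is_deriveM (is_deriveX e (is_derive_id a 1)) ds.
rewrite mulrfctE exprfctE /= => dprod.
under eq_fun do rewrite (mulrC _ x).
apply: (is_derive_eq dprod).
by rewrite /GRing.scale /= mulr1; ring.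
Qed.

Definition neuron_da k sigma a x :=
  k%:R * a ^+ k.-1 * derive1n k sigma (a * x) + a ^+ k * x * derive1n k.+1 sigma (a * x).

Definition neuron_daa k sigma a x :=
  (k * k.-1)%:R * a ^+ k.-2 * derive1n k sigma (a * x)
  + (2 * k)%:R * a ^+ k.-1 * x * derive1n k.+1 sigma (a * x)
  + a ^+ k * x ^+ 2 * derive1n k.+2 sigma (a * x).

Lemma is_derive_neuron_da k sigma a x : derivable (derive1n k sigma) (a * x) 1 ->
  is_derive a 1 (fun b => neuron k sigma b x) (neuron_da k sigma a x).
Proof. exact: is_derive_powM_dilate. Qed.

Lemma is_derive_neuron_daa k sigma a x :
  derivable (derive1n k sigma) (a * x) 1 -> derivable (derive1n k.+1 sigma) (a * x) 1 ->
  is_derive a 1 (fun b => neuron_da k sigma b x) (neuron_daa k sigma a x).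
Proof.
move=> /(is_derive_powM_dilate k.-1) /(is_deriveMl k%:R) dk.
move=> /(is_derive_powM_dilate k) /(is_deriveMl x) dk1.
have := is_deriveD dk dk1; rewrite addrfctE => dk2.
have -> : (fun b => neuron_da k sigma b x) = fun b =>
    k%:R * (b ^+ k.-1 * derive1n k sigma (b * x)) + x * (b ^+ k * derive1n k.+1 sigma (b * x)).
  by apply/funext => b; rewrite /neuron_da; ring.
apply: (is_derive_eq dk2).
by rewrite /neuron_daa !natrM; ring.
Qed.

Lemma is_derive_sumf n (h : 'I_n -> R -> R) (dh : 'I_n -> R) x :
  (forall i, is_derive x 1 (h i) (dh i)) ->
  is_derive x 1 (fun y => \sum_(i < n) h i y) (\sum_(i < n) dh i).
Proof. by move=> hdh; rewrite -fct_sumE; exact: is_derive_sum. Qed.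

Lemma derive1n_uNN m sigma (W0 W1 : 'I_m -> R) j :
  (forall i, (i < j)%N -> forall y, derivable (derive1n i sigma) y 1) ->
  derive1n j (uNN sigma W0 W1) =
  fun x => (Num.sqrt m%:R)^-1 * \sum_(i < m) W1 i * neuron j sigma (W0 i) x.
Proof.
elim: j => [_|j IHj dsigma].
  by apply/funext => x; rewrite /uNN; under eq_bigr do rewrite /neuron expr0 mul1r.
rewrite derive1nS IHj => [|i /ltnW]; last exact: dsigma.
apply/funext => x; apply/derive1_val/is_deriveMl/is_derive_sumf => i.
exact/is_deriveMl/is_derive_neuron/dsigma.
Qed.

Lemma is_derive_sum_upd m (F : 'I_m -> R -> R) (W : 'I_m -> R) i df :
  is_derive (W i) 1 (F i) df ->
  is_derive (W i) 1 (fun t => \sum_(j < m) F j (upd W i t j)) df.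
Proof.
move=> Fdf; have -> : df = \sum_(j < m) (if j == i then df else 0).
  by rewrite -big_mkcond big_pred1_eq.
apply: is_derive_sumf => j; rewrite /upd.
by case: eqVneq => [->|_]; [exact: Fdf | exact: is_derive_cst].
Qed.

Lemma grad0_neuron k m sigma (W0 W1 : 'I_m -> R) x i :
  (forall j, (j <= k)%N -> forall y, derivable (derive1n j sigma) y 1) ->
  grad0 k sigma W0 W1 x i = (Num.sqrt m%:R)^-1 * (W1 i * neuron_da k sigma (W0 i) x).
Proof.
move=> dsigma; have dsigma' j (jk : (j < k)%N) := dsigma j (ltnW jk).
rewrite /grad0 /dkuNN; under eq_fun do rewrite derive1n_uNN //.
apply/derive1_val/is_deriveMl.
apply: (is_derive_sum_upd (F := fun j b => W1 j * neuron k sigma b x)).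
exact/is_deriveMl/is_derive_neuron_da/dsigma.
Qed.

Lemma grad1_neuron k m sigma (W0 W1 : 'I_m -> R) x i :
  (forall j, (j < k)%N -> forall y, derivable (derive1n j sigma) y 1) ->
  grad1 k sigma W0 W1 x i = (Num.sqrt m%:R)^-1 * neuron k sigma (W0 i) x.
Proof.
move=> dsigma; rewrite /grad1 /dkuNN.
under eq_fun do rewrite derive1n_uNN //.
apply/derive1_val/is_deriveMl.
apply: (is_derive_sum_upd (F := fun j b => b * neuron k sigma (W0 j) x)).
under eq_fun do rewrite mulrC.
by apply: (is_derive_eq (is_deriveMl _ (is_derive_id _ _))); rewrite mulr1.
Qed.

End neuron_derivatives.

Section neuron_bounds.
Variable R : realType.
Implicit Types (sigma : R -> R) (a x : R).

Lemma ler_sqr_norm (p q : R) : `|p| <= `|q| -> p ^+ 2 <= q ^+ 2.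
Proof.
by move=> pq; rewrite -(real_normK (num_real p)) -(real_normK (num_real q)) lerXn2r ?nnegrE.
Qed.

Lemma ler_dist_derive (f df : R -> R) (rho L a b : R) :
  (forall t : R, is_derive t 1 f (df t)) -> (forall t, `|t| <= rho -> `|df t| <= L) ->
  `|a| <= rho -> `|b| <= rho -> `|f a - f b| <= L * `|a - b|.
Proof.
move=> fdf dfL.
wlog ba : a b / b <= a.
  move=> wlog_ba arho brho; have [ba|/ltW ab] := leP b a; first exact: wlog_ba.
  by rewrite distrC (distrC a); exact: wlog_ba ab brho arho.
move=> arho brho.
have fcont : continuous f.
  by move=> t; apply/differentiable_continuous/derivable1_diffP; case: (fdf t).
have [c cba ->] := MVT_segment ba (fun t _ => fdf t) (continuous_subspaceT fcont).
rewrite normrM ler_wpM2r //; apply: dfL.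
move: cba arho brho; rewrite in_itv /= !ler_norml => /andP[bc ca] /andP[_ arho] /andP[rhob _].
by rewrite (le_trans rhob bc) (le_trans ca arho).
Qed.

Lemma neuron_term_le sigma j (D : R) N (rho X a x : R) e e' n :
  0 <= rho -> 0 <= X -> `|a| <= rho -> `|x| <= X -> (e + e' <= n)%N ->
  (forall y, `|derive1n j sigma y| <= D * (1 + `|y|) ^+ N) ->
  `|a ^+ e * x ^+ e' * derive1n j sigma (a * x)| <= D * ((1 + rho) * (1 + X)) ^+ (n + N).
Proof.
move=> rho0 X0 arho xX een growth.
set u := (1 + rho) * (1 + X).
have a0 := normr_ge0 a; have x0 := normr_ge0 x.
have u1 : 1 <= u by rewrite /u; nra.
have u0 : 0 <= u by lra.
have au : `|a| <= u by rewrite /u; nra.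
have xu : `|x| <= u by rewrite /u; nra.
have axu : 1 + `|a * x| <= u by rewrite normrM /u; nra.
have D0 : 0 <= D.
  by have := growth 0; rewrite normr0 addr0 expr1n mulr1; apply: le_trans.
rewrite !normrM !normrX; apply: le_trans (_ : u ^+ e * u ^+ e' * (D * u ^+ N) <= _).
  rewrite ler_pM ?mulr_ge0 ?exprn_ge0 //; last first.
    by rewrite (le_trans (growth _)) // ler_wpM2l // lerXn2r ?nnegrE ?addr_ge0.
  by rewrite ler_pM ?exprn_ge0 // lerXn2r ?nnegrE.
rewrite -exprD mulrCA -exprD ler_wpM2l // ler_weXn2l //.
by rewrite leq_add2r.
Qed.

Lemma neuron_bounds k sigma (D : R) N (rho X a x : R) :
  0 <= rho -> 0 <= X -> `|a| <= rho -> `|x| <= X ->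
  (forall j y, (k <= j <= k.+2)%N -> `|derive1n j sigma y| <= D * (1 + `|y|) ^+ N) ->
  let L := (k.+1 ^ 2)%:R * (D * ((1 + rho) * (1 + X)) ^+ (k.+2 + N)) in
  [/\ `|neuron k sigma a x| <= L, `|neuron_da k sigma a x| <= L & `|neuron_daa k sigma a x| <= L].
Proof.
move=> rho0 X0 arho xX growth L.
pose B := D * ((1 + rho) * (1 + X)) ^+ (k.+2 + N).
pose t e e' j := a ^+ e * x ^+ e' * derive1n j sigma (a * x).
have tB e e' j : (e + e' <= k.+2)%N -> (k <= j <= k.+2)%N -> `|t e e' j| <= B.
  by move=> ee jk; apply: neuron_term_le => // y; exact: growth.
have kj : (k <= k <= k.+2)%N by rewrite leqnn -addn2 leq_addr.
have B0 : 0 <= B := le_trans (normr_ge0 _) (tB 0 0 k isT kj).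
have ctB c e e' j : (e + e' <= k.+2)%N -> (k <= j <= k.+2)%N ->
    `|c%:R * t e e' j| <= c%:R * B.
  by move=> ee jk; rewrite normrM normr_nat ler_wpM2l // tB.
have LB c : (c <= k.+1 ^ 2)%N -> c%:R * B <= L by move=> ck; rewrite ler_wpM2r ?ler_nat.
split.
- have -> : neuron k sigma a x = t k 0 k by rewrite /t /neuron expr0 mulr1.
  apply: le_trans (tB k 0 k _ kj) _; first lia.
  by rewrite -[B]mul1r; apply: (LB 1%N); rewrite expn_gt0.
- have -> : neuron_da k sigma a x = k%:R * t k.-1 0 k + t k 1 k.+1.
    by rewrite /t /neuron_da expr0 expr1 mulr1 mulrA.
  apply: le_trans (ler_normD _ _) (le_trans _ (LB (k + 1)%N _)); last lia.
  by rewrite natrD mulrDl mul1r; apply: lerD; [apply: ctB | apply: tB]; lia.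
- have -> : neuron_daa k sigma a x =
      (k * k.-1)%:R * t k.-2 0 k + (2 * k)%:R * t k.-1 1 k.+1 + t k 2 k.+2.
    by rewrite /t /neuron_daa expr0 expr1 mulr1 !mulrA.
  apply: le_trans (ler_normD _ _) (le_trans _ (LB (k * k.-1 + 2 * k + 1)%N _)); last nia.
  rewrite (natrD _ _ 1) (natrD _ (k * k.-1)) !mulrDl mul1r.
  apply: lerD; last by apply: tB; lia.
  by apply: le_trans (ler_normD _ _) _; apply: lerD; apply: ctB; lia.
Qed.

End neuron_bounds.

Lemma sum_sqr_le_norm2 (R : realType) m (V : 'I_m -> R) r :
  norm2 V <= r -> \sum_(i < m) V i ^+ 2 <= r ^+ 2.
Proof.
move=> Vr; rewrite -[X in X <= _]sqr_sqrtr ?sumr_ge0 // => [|i _]; last exact: sqr_ge0.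
by apply: ler_sqr_norm; rewrite ger0_norm ?sqrtr_ge0 // (le_trans Vr (ler_norm r)).
Qed.

Lemma norm_le_norm2 (R : realType) m (V : 'I_m -> R) i : `|V i| <= norm2 V.
Proof.
rewrite -sqrtr_sqr ler_sqrt ?sumr_ge0 // => [|j _]; last exact: sqr_ge0.
by rewrite (bigD1 i) //= lerDl sumr_ge0 // => j _; exact: sqr_ge0.
Qed.

Section grad_diff_bound.
Variables (R : realType) (k : nat) (sigma : R -> R) (x rho L : R).
Hypothesis dsigma : forall j, (j < k.+2)%N -> forall y, derivable (derive1n j sigma) y 1.
Hypothesis neuron_le : forall a, `|a| <= rho ->
  [/\ `|neuron k sigma a x| <= L, `|neuron_da k sigma a x| <= L & `|neuron_daa k sigma a x| <= L].

Lemma neuron_lipschitz (a b : R) : `|a| <= rho -> `|b| <= rho ->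
  `|neuron k sigma a x - neuron k sigma b x| <= L * `|a - b|.
Proof.
apply: (@ler_dist_derive _ (neuron k sigma ^~ x) (neuron_da k sigma ^~ x)) => t.
  exact/is_derive_neuron_da/dsigma/leqW.
by case/neuron_le.
Qed.

Lemma neuron_da_lipschitz (a b : R) : `|a| <= rho -> `|b| <= rho ->
  `|neuron_da k sigma a x - neuron_da k sigma b x| <= L * `|a - b|.
Proof.
apply: (@ler_dist_derive _ (neuron_da k sigma ^~ x) (neuron_daa k sigma ^~ x)) => t.
  by apply: is_derive_neuron_daa; apply: dsigma.
by case/neuron_le.
Qed.

Lemma grad_coord_sq_le (w0 w1 v0 v1 : R) : `|w0| <= rho -> `|w1| <= rho -> `|v0| <= rho ->
  (w1 * neuron_da k sigma w0 x - v1 * neuron_da k sigma v0 x) ^+ 2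
    + (neuron k sigma w0 x - neuron k sigma v0 x) ^+ 2
  <= L ^+ 2 * ((2 * rho ^+ 2 + 1) * (w0 - v0) ^+ 2 + 2 * (w1 - v1) ^+ 2).
Proof.
move=> w0rho w1rho v0rho.
have [_ gL _] := neuron_le v0rho.
have L0 : 0 <= L := le_trans (normr_ge0 _) gL.
set f := neuron_da k sigma w0 x; set g := neuron_da k sigma v0 x.
have p2 : (w1 * (f - g)) ^+ 2 <= (rho * L) ^+ 2 * (w0 - v0) ^+ 2.
  rewrite -exprMn; apply: ler_sqr_norm; rewrite !normrM (ger0_norm L0).
  rewrite (ger0_norm (le_trans (normr_ge0 _) w0rho)) -mulrA.
  by rewrite ler_pM // neuron_da_lipschitz.
have q2 : ((w1 - v1) * g) ^+ 2 <= L ^+ 2 * (w1 - v1) ^+ 2.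
  by rewrite mulrC exprMn ler_wpM2r ?sqr_ge0 // ler_sqr_norm // (ger0_norm L0).
have h2 : (neuron k sigma w0 x - neuron k sigma v0 x) ^+ 2 <= L ^+ 2 * (w0 - v0) ^+ 2.
  rewrite -exprMn; apply: ler_sqr_norm; rewrite normrM (ger0_norm L0).
  exact: neuron_lipschitz.
have -> : w1 * f - v1 * g = w1 * (f - g) + (w1 - v1) * g by ring.
set p := w1 * (f - g) in p2 *; set q := (w1 - v1) * g in q2 *.
have pq : (p + q) ^+ 2 <= 2 * p ^+ 2 + 2 * q ^+ 2.
  by rewrite -subr_ge0 (_ : _ - _ = (p - q) ^+ 2) ?sqr_ge0 //; ring.
have -> : L ^+ 2 * ((2 * rho ^+ 2 + 1) * (w0 - v0) ^+ 2 + 2 * (w1 - v1) ^+ 2) =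
    2 * ((rho * L) ^+ 2 * (w0 - v0) ^+ 2) + 2 * (L ^+ 2 * (w1 - v1) ^+ 2)
    + L ^+ 2 * (w0 - v0) ^+ 2 by ring.
lra.
Qed.

Lemma grad_diff_norm_sq_le m (W0 W1 V0 V1 : 'I_m -> R) r : 0 <= rho ->
  (forall i, [/\ `|W0 i| <= rho, `|W1 i| <= rho & `|V0 i| <= rho]) ->
  norm2 (fun i => W0 i - V0 i) <= r -> norm2 (fun i => W1 i - V1 i) <= r ->
  grad_diff_norm k sigma W0 W1 V0 V1 x ^+ 2 <= m%:R^-1 * (2 * (1 + rho) * L * r) ^+ 2.
Proof.
move=> rho0 Wrho /sum_sqr_le_norm2 d0r /sum_sqr_le_norm2 d1r.
have dsigma0 j (jk : (j <= k)%N) := dsigma (leqW jk).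
have dsigma1 j (jk : (j < k)%N) := dsigma0 j (ltnW jk).
have c2 : (Num.sqrt m%:R)^-1 ^+ 2 = m%:R^-1 :> R by rewrite exprVn sqr_sqrtr.
rewrite /grad_diff_norm sqr_sqrtr; last by rewrite addr_ge0 // sumr_ge0 // => i _; exact: sqr_ge0.
rewrite -big_split /=.
under eq_bigr do rewrite !grad0_neuron // !grad1_neuron // -!mulrBr !exprMn c2 -mulrDr.
rewrite -mulr_sumr ler_wpM2l ?invr_ge0 //.
apply: le_trans (_ : \sum_(i < m) L ^+ 2 * ((2 * rho ^+ 2 + 1) * (W0 i - V0 i) ^+ 2
                                          + 2 * (W1 i - V1 i) ^+ 2) <= _).
  by apply: ler_sum => i _; have [] := Wrho i; exact: grad_coord_sq_le.
rewrite -mulr_sumr big_split /= -!mulr_sumr.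
have rho1 : 0 <= 2 * rho ^+ 2 + 1 by rewrite addr_ge0 ?mulr_ge0 ?sqr_ge0.
apply: le_trans (ler_wpM2l (sqr_ge0 L) (lerD (ler_wpM2l rho1 d0r) (ler_wpM2l (ler0n R 2) d1r))) _.
rewrite -subr_ge0 (_ : _ - _ = (L * r) ^+ 2 * (2 * rho ^+ 2 + 8 * rho + 1)); last by ring.
by rewrite mulr_ge0 ?sqr_ge0 //; have := sqr_ge0 rho; lra.
Qed.

End grad_diff_bound.

Section activation_growth.
Variable R : realType.

Lemma powR_growth_le_expr (s : R -> R) (l C : R) : 0 < l ->
  (forall y, `|s y| <= C * (1 + `|y| `^ l)) ->
  forall y, `|s y| <= 2 * `|C| * (1 + `|y|) ^+ (Num.truncn l).+1.
Proof.
move=> l0 sC y; apply: le_trans (sC y) _.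
have y0 := normr_ge0 y; have y1 : 1 <= 1 + `|y| by lra.
have powl : `|y| `^ l <= (1 + `|y|) ^+ (Num.truncn l).+1.
  rewrite -powR_mulrn ?(le_trans ler01) //.
  apply: (le_trans _ (ler_powR y1 (ltW (Num.Theory.truncnS_gt l)))).
  by apply: ge0_ler_powR; rewrite ?nnegrE; lra.
have : 1 <= (1 + `|y|) ^+ (Num.truncn l).+1 by rewrite exprn_ege1.
have := powR_ge0 `|y| l; have := ler_norm C; have := normr_ge0 C.
nra.
Qed.

Lemma activation_poly_growth n (sigma : R -> R) : activation_assumption n sigma ->
  exists (D : R) (N : nat), 0 <= D /\
    forall j y, (1 <= j <= n)%N -> `|derive1n j sigma y| <= D * (1 + `|y|) ^+ N.
Proof.
case=> _ [_ [l growth]].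
suff /(_ n (leqnn n)) : forall p, (p <= n)%N -> exists (D : R) (N : nat), 0 <= D /\
    forall j y, (1 <= j <= p)%N -> `|derive1n j sigma y| <= D * (1 + `|y|) ^+ N by [].
elim=> [_|p IHp pn]; first by exists 0, 0%N; split => // -[|j] y /andP[].
have [D [N [D0 DN]]] := IHp (ltnW pn).
have [l0 [C /(powR_growth_le_expr l0) sC]] : 0 < l p.+1 /\ _ := growth p.+1 pn.
set N' := (Num.truncn (l p.+1)).+1 in sC.
have C0 : 0 <= 2 * `|C| by rewrite mulr_ge0.
exists (D + 2 * `|C|), (N + N')%N; split => [|j y /andP[j1]]; first exact: addr_ge0.
have y1 : 1 <= 1 + `|y| by rewrite lerDl.
have widen D' N'' : 0 <= D' -> D' <= D + 2 * `|C| -> (N'' <= N + N')%N ->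
    D' * (1 + `|y|) ^+ N'' <= (D + 2 * `|C|) * (1 + `|y|) ^+ (N + N').
  by move=> D'0 D'le N''le; rewrite ler_pM ?exprn_ge0 ?ler_weXn2l // (le_trans ler01).
rewrite leq_eqVlt ltnS => /orP[/eqP->|jp].
  by apply: le_trans (sC y) (widen _ _ C0 _ _); rewrite ?lerDr ?leq_addl.
by apply: le_trans (DN j y _) (widen _ _ D0 _ _); rewrite ?j1 ?lerDl ?leq_addr.
Qed.

End activation_growth.

Lemma grad_diff_norm_poly_bound (R : realType) k (sigma : R -> R) (X : R) :
  (1 <= k)%N -> activation_assumption k.+2 sigma -> 0 <= X ->
  exists (E : R) (q : nat), 0 <= E /\
  forall m (W0 W1 V0 V1 : 'I_m -> R) (x rho r : R), 0 <= rho -> `|x| <= X ->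
    (forall i, [/\ `|W0 i| <= rho, `|W1 i| <= rho & `|V0 i| <= rho]) ->
    norm2 (fun i => W0 i - V0 i) <= r -> norm2 (fun i => W1 i - V1 i) <= r ->
    grad_diff_norm k sigma W0 W1 V0 V1 x ^+ 2 <= m%:R^-1 * (E * (1 + rho) ^+ q * r) ^+ 2.
Proof.
move=> k1 act X0; have [dsigma _] := act.
have [D [N [D0 growth]]] := activation_poly_growth act.
exists (2 * (k.+1 ^ 2)%:R * D * (1 + X) ^+ (k.+2 + N)), (k.+2 + N).+1.
have X1 : 0 <= 1 + X by lra.
split; first by rewrite mulr_ge0 ?exprn_ge0 // !mulr_ge0 ?ler0n.
move=> m W0 W1 V0 V1 x rho r rho0 xX Wrho d0r d1r.
set L := (k.+1 ^ 2)%:R * (D * ((1 + rho) * (1 + X)) ^+ (k.+2 + N)).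
have neuron_le a : `|a| <= rho -> [/\ `|neuron k sigma a x| <= L,
    `|neuron_da k sigma a x| <= L & `|neuron_daa k sigma a x| <= L].
  move=> arho; apply: neuron_bounds => // j y /andP[kj jk]; apply: growth.
  by rewrite jk (leq_trans k1 kj).
apply: le_trans (grad_diff_norm_sq_le dsigma neuron_le rho0 Wrho d0r d1r) _.
rewrite [X in _ <= X](_ : _ = m%:R^-1 * (2 * (1 + rho) * L * r) ^+ 2) //.
by rewrite /L (exprMn _ (1 + rho)) [(1 + rho) ^+ _.+1]exprS; ring.
Qed.

Lemma measurable_norm_gt d (T : measurableType d) (R : realType) (Y : T -> R) (M : R) :
  measurable_fun setT Y -> measurable [set w | M < `|Y w|].
Proof.
move=> mY; have := measurableT_comp (@normr_measurable R setT) mY measurableT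
  (measurable_itv `]M, +oo[).
by rewrite setTI; congr measurable; apply/seteqP; split => w /=; rewrite in_itv /= andbT.
Qed.

Section large_weights.
Context d (Omega : measurableType d) (R : realType).

Lemma markov_even_moment (mu : {measure set Omega -> \bar R}) (Y : Omega -> R) (a : nat) (M : R) :
  measurable_fun setT Y -> 0 <= M ->
  ((M ^+ (2 * a))%:E * mu [set w | (M < `|Y w|)%R] <= \int[mu]_w (Y w ^+ (2 * a))%:E)%E.
Proof.
move=> mY M0; have mYM := measurable_norm_gt M mY.
have mY2a : measurable_fun setT (fun w => (Y w ^+ (2 * a))%:E).
  by apply/measurable_EFinP; exact: measurable_funX.
have Y2a0 w : (0 <= (Y w ^+ (2 * a))%:E)%E by rewrite lee_fin exprM exprn_ge0 ?sqr_ge0.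
rewrite -integral_cst //.
apply: le_trans (ge0_subset_integral mu mYM measurableT mY2a (fun w _ => Y2a0 w) (subsetT _)).
apply: ge0_le_integral => //; first by move=> w _; rewrite lee_fin exprn_ge0.
  exact: measurable_funS mY2a.
move=> w /= /ltW MY; rewrite lee_fin !exprM lerXn2r ?nnegrE ?sqr_ge0 //.
by apply: ler_sqr_norm; rewrite ger0_norm // normr_id.
Qed.

Definition large_weights (Z : bool * nat -> Omega -> R) (n : nat) (M : R) : set Omega :=
  \bigcup_(i < n) ([set w | M < `|Z (false, i) w|] `|` [set w | M < `|Z (true, i) w|]).

Variables (P : probability Omega R) (Z : bool * nat -> Omega -> R).
Hypothesis mZ : forall j, measurable_fun setT (Z j).
Hypothesis idZ : identically_distributed P Z.

Lemma not_large_weightsP n M w : ~ large_weights Z n M w ->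
  forall b i, (i < n)%N -> `|Z (b, i) w| <= M.
Proof.
move=> smallw b i ilt; rewrite leNgt; apply/negP => Mlt; apply: smallw.
by exists i => //; case: b Mlt; [right | left].
Qed.

Lemma measurable_large_weights n M : measurable (large_weights Z n M).
Proof.
rewrite /large_weights bigcup_mkord.
by apply: bigsetU_measurable => i _; apply: measurableU; apply: measurable_norm_gt.
Qed.

Lemma large_weights_prob n a (M delta : R) : 0 < M ->
  ((2 * n)%:R%:E * \int[P]_w (Z (false, 0%N) w ^+ (2 * a))%:E <= (delta * M ^+ (2 * a))%:E)%E ->
  ((1 - delta)%:E <= P (~` large_weights Z n M))%E.
Proof.
move=> M0 momentM.
have mlarge j : measurable [set w | M < `|Z j w|] by exact: measurable_norm_gt.
pose t := fine (P [set w | M < `|Z (false, 0%N) w|]).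
have Pt j : P [set w | M < `|Z j w|] = t%:E.
  have mM : measurable [set y : R | M < `|y|] := measurable_norm_gt M (@measurable_id _ R setT).
  by rewrite (idZ j (false, 0%N) mM) fineK // fin_num_measure.
have Plarge : (P (large_weights Z n M) <= ((2 * n)%:R * t)%:E)%E.
  pose A i := [set w | M < `|Z (false, i) w|] `|` [set w | M < `|Z (true, i) w|].
  rewrite /large_weights bigcup_mkord.
  apply: le_trans (Boole_inequality P (A := A) (n := n) _) _ => [i _|].
    exact: measurableU.
  have -> : ((2 * n)%:R * t)%:E = (\sum_(i < n) (2 * t)%:E)%E.
    by rewrite sumEFin sumr_const card_ord -mulr_natl natrM; congr EFin; ring.
  apply: lee_sum => i _; apply: le_trans (measureU2 _ _ _) _ => //.
  have Pt' j : (P : {content set Omega -> \bar R}) [set w | M < `|Z j w|] = t%:E := Pt j.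
  by rewrite !Pt' -EFinD lee_fin; lra.
have markov : ((M ^+ (2 * a) * t)%:E <= \int[P]_w (Z (false, 0%N) w ^+ (2 * a))%:E)%E.
  by rewrite EFinM -(Pt (false, 0%N)); exact: markov_even_moment (mZ _) (ltW M0).
have mL := measurable_large_weights n M.
pose p := fine (P (large_weights Z n M)).
have Pp : P (large_weights Z n M) = p%:E by rewrite fineK // fin_num_measure.
have M2a : 0 < M ^+ (2 * a) by rewrite exprn_gt0.
have : ((M ^+ (2 * a) * p)%:E <= (delta * M ^+ (2 * a))%:E)%E.
  apply: le_trans momentM; rewrite EFinM -Pp.
  apply: le_trans (lee_wpmul2l (ltW M2a : 0 <= (M ^+ (2 * a))%:E)%E Plarge) _.
  rewrite -EFinM mulrCA EFinM; exact: lee_wpmul2l.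
rewrite lee_fin [delta * _]mulrC ler_pM2l // => pdelta.
by rewrite probability_setC // Pp -EFinB lee_fin lerB.
Qed.

End large_weights.

Section root_scaling.
Variable R : realType.

Lemma exprn_powR_invn (x : R) n : 0 <= x -> (0 < n)%N -> (x `^ n%:R^-1) ^+ n = x.
Proof.
move=> x0 n0; rewrite -powR_mulrn ?powR_ge0 // -powRrM mulVf ?powRr1 //.
by rewrite pnatr_eq0 -lt0n.
Qed.

Lemma powR_nat_cvgy (p L : R) : 0 < p -> 0 < L ->
  (fun n : nat => n%:R `^ p / L) @ \oo --> +oo.
Proof.
move=> p0 L0; apply/cvgryPge => A; near=> n.
rewrite ler_pdivlMr // (le_trans (ler_norm _)) //.
have {1}-> : `|A * L| = (`|A * L| `^ p^-1) `^ p by rewrite -powRrM mulVf ?powRr1 ?lt0r_neq0.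
apply: ge0_ler_powR; rewrite ?nnegrE ?powR_ge0 ?(ltW p0) //; near: n.
exact: nbhs_infty_ger.
Unshelve. all: end_near. Qed.

Lemma root_radius_bound (E K eta c r : R) (q m : nat) :
  0 <= E -> 0 <= K -> 0 <= eta <= 1 -> 0 <= c -> c ^+ (2 * q.+2) = m%:R ->
  0 <= r <= c / (1 + E * (3 + K) ^+ q) * eta ->
  m%:R^-1 * (E * (1 + (1 + K * c + r)) ^+ q * r) ^+ 2 <= eta ^+ 2.
Proof.
move=> E0 K0 /andP[eta0 eta1] c0 cm /andP[r0 rc].
have [->|m0] := posnP m; first by rewrite invr0 mul0r sqr_ge0.
have c1 : 1 <= c by rewrite -(@expr_ge1 _ (2 * q.+2)) // cm ler1n.
set L := 1 + E * (3 + K) ^+ q in rc.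
have EK0 : 0 <= E * (3 + K) ^+ q by rewrite mulr_ge0 ?exprn_ge0 //; lra.
have EL : E * (3 + K) ^+ q <= L by rewrite /L; lra.
have L0 : 0 < L by rewrite /L; lra.
have rc' : r <= c.
  apply: le_trans rc _; rewrite -mulrA ler_piMr // mulrC ler_pdivrMr // mul1r.
  by rewrite (le_trans eta1) // /L; lra.
have rho_le : 1 + (1 + K * c + r) <= (3 + K) * c by rewrite mulrDl; lra.
have X_le : E * (1 + (1 + K * c + r)) ^+ q * r <= c ^+ q.+1 * eta.
  apply: le_trans (_ : E * ((3 + K) * c) ^+ q * (c / L * eta) <= _).
    have Kc0 : 0 <= K * c by rewrite mulr_ge0.
    apply: ler_pM => //; first by rewrite mulr_ge0 ?exprn_ge0 //; lra.
    by rewrite ler_wpM2l // lerXn2r ?nnegrE ?mulr_ge0 //; lra.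
  have -> : E * ((3 + K) * c) ^+ q * (c / L * eta) = E * (3 + K) ^+ q / L * (c ^+ q.+1 * eta).
    by rewrite exprMn exprS; ring.
  by rewrite ler_piMl ?mulr_ge0 ?exprn_ge0 // ler_pdivrMr // mul1r.
have X0 : 0 <= E * (1 + (1 + K * c + r)) ^+ q * r.
  by rewrite !mulr_ge0 ?exprn_ge0 // addr_ge0 // !addr_ge0 // mulr_ge0.
rewrite mulrC ler_pdivrMr ?ltr0n // -cm.
apply: le_trans (_ : (c ^+ q.+1 * eta) ^+ 2 <= _).
  by rewrite lerXn2r ?nnegrE // mulr_ge0 ?exprn_ge0.
rewrite exprMn mulrC ler_wpM2l ?sqr_ge0 // -exprM ler_weXn2l //.
by rewrite mulnC leq_mul2l ltnW.
Qed.

Lemma moment_budget (S delta c : R) (s m : nat) : 0 <= S -> 0 < delta -> 0 <= c ->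
  (0 < s)%N -> c ^+ (2 * s) = m%:R ->
  (2 * m)%:R * S <= delta * (1 + (1 + 2 * S / delta) * c) ^+ (2 * s).
Proof.
move=> S0 delta0 c0 s0 cm; set K := 1 + 2 * S / delta.
have K1 : 1 <= K by rewrite /K lerDl divr_ge0 ?mulr_ge0 // ltW.
have deltaK : delta * K = delta + 2 * S by rewrite /K mulrDr mulr1 mulrCA divff ?mulr1 // gt_eqF.
apply: le_trans (_ : delta * (K * m%:R) <= _).
  by rewrite mulrA deltaK natrM mulrC mulrA ler_wpM2r ?ler0n // mulrC; lra.
rewrite ler_wpM2l ?(ltW delta0) // -cm.
apply: (@le_trans _ _ ((K * c) ^+ (2 * s))); last first.
  have Kc0 : 0 <= K * c by rewrite mulr_ge0 // (le_trans ler01 K1).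
  by rewrite lerXn2r ?nnegrE //; lra.
rewrite exprMn ler_wpM2r ?exprn_ge0 // -[K in K <= _]expr1 ler_weXn2l //.
by rewrite muln_gt0.
Qed.

End root_scaling.

Section small_weights_bound.
Variables (R : realType) (k : nat) (sigma : R -> R) (X E K : R) (q : nat).
Hypotheses (E0 : 0 <= E) (K0 : 0 <= K).
Hypothesis gradE : forall m (W0 W1 V0 V1 : 'I_m -> R) (x rho r : R), 0 <= rho -> `|x| <= X ->
  (forall i, [/\ `|W0 i| <= rho, `|W1 i| <= rho & `|V0 i| <= rho]) ->
  norm2 (fun i => W0 i - V0 i) <= r -> norm2 (fun i => W1 i - V1 i) <= r ->
  grad_diff_norm k sigma W0 W1 V0 V1 x ^+ 2 <= m%:R^-1 * (E * (1 + rho) ^+ q * r) ^+ 2.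

Lemma grad_diff_norm_le m (W0 W1 V0 V1 : 'I_m -> R) (x c r eta eps : R) :
  0 <= c -> c ^+ (2 * q.+2) = m%:R -> 0 <= eta <= 1 -> eta <= eps -> `|x| <= X ->
  (forall i, `|V0 i| <= 1 + K * c /\ `|V1 i| <= 1 + K * c) ->
  0 <= r <= c / (1 + E * (3 + K) ^+ q) * eta ->
  norm2 (fun i => W0 i - V0 i) <= r -> norm2 (fun i => W1 i - V1 i) <= r ->
  grad_diff_norm k sigma W0 W1 V0 V1 x <= eps.
Proof.
move=> c0 cm eta01 etaeps xX V_le r01 d0 d1.
have [r0 _] := andP r01; have [eta0 _] := andP eta01.
set M := 1 + K * c in V_le.
have M0 : 0 <= M by rewrite addr_ge0 ?mulr_ge0.
have ball_le (V V' : 'I_m -> R) i : `|V' i| <= M ->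
    norm2 (fun j => V j - V' j) <= r -> `|V i| <= M + r.
  move=> V'M /(le_trans (norm_le_norm2 _ i)) /= Vr.
  rewrite -[V i](subrK (V' i)) [M + r]addrC.
  exact: le_trans (ler_normD _ _) (lerD Vr V'M).
have Wrho i : [/\ `|W0 i| <= M + r, `|W1 i| <= M + r & `|V0 i| <= M + r].
  have [V0M V1M] := V_le i.
  by split; [exact: ball_le d0 | exact: ball_le d1 | rewrite (le_trans V0M) ?lerDl].
have := gradE (addr_ge0 M0 r0) xX Wrho d0 d1.
move/le_trans/(_ (root_radius_bound E0 K0 eta01 c0 cm r01)) => grad_eta.
rewrite -(@ler_pXn2r _ 2) ?nnegrE ?sqrtr_ge0 ?(le_trans eta0 etaeps) //.
by rewrite (le_trans grad_eta) // lerXn2r ?nnegrE ?(le_trans eta0 etaeps).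
Qed.

End small_weights_bound.

Lemma compact_norm_le (R : realType) (T : set R) :
  compact T -> exists X, 0 <= X /\ forall x, T x -> `|x| <= X.
Proof.
move=> /compact_bounded[M [_ /(_ (`|M| + 1))]].
rewrite (le_lt_trans (ler_norm M)) ?ltrDl // => /(_ isT) TM.
by exists (`|M| + 1); split => [|x /TM]; rewrite ?addr_ge0.
Qed.

Theorem lemma6 (R : realType) (d : measure_display) (Omega : measurableType d)
    (P : probability Omega R) (Z : bool * nat -> Omega -> R)
    (sigma : R -> R) (T : set R) (k : nat) :
  iid_init P Z ->
  convex_R T -> compact T ->
  (1 <= k)%N ->
  activation_assumption k.+2 sigma ->
  forall delta : R, 0 < delta ->
  exists (B : nat -> R) (eta : R -> R),
    B @ \oo --> +oo /\
    (forall eps, 0 < eps -> 0 < eta eps) /\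
    forall m : nat,
      let W00 := fun w (i : 'I_m) => Z (false, val i) w in
      let W10 := fun w (i : 'I_m) => Z (true, val i) w in
      exists A : set Omega, measurable A /\ (P A >= (1 - delta)%:E)%E /\
        forall w, A w ->
          forall eps, 0 < eps ->
          forall W0 W1 : 'I_m -> R,
            norm2 (fun i => W0 i - W00 w i) <= B m * eta eps ->
            norm2 (fun i => W1 i - W10 w i) <= B m * eta eps ->
            forall x, T x ->
              grad_diff_norm k sigma W0 W1 (W00 w) (W10 w) x <= eps.
Proof.
move=> [mZ [_ [idZ [momentZ _]]]] _ /compact_norm_le[X [X0 TX]] k1 act delta delta0.
have [E [q [E0 gradE]]] := grad_diff_norm_poly_bound k1 act X0.
pose S := fine (\int[P]_w (Z (false, 0%N) w ^+ (2 * q.+2))%:E).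
have SE : (\int[P]_w (Z (false, 0%N) w ^+ (2 * q.+2))%:E)%E = S%:E.
  by rewrite fineK // integrable_fin_num.
have S0 : 0 <= S.
  by rewrite fine_ge0 // integral_ge0 // => w _; rewrite lee_fin exprM exprn_ge0 ?sqr_ge0.
pose K := 1 + 2 * S / delta.
have K0 : 0 <= K by rewrite addr_ge0 // divr_ge0 ?mulr_ge0 // ltW.
pose c m := m%:R `^ (2 * q.+2)%:R^-1 : R.
have c0 m : 0 <= c m := powR_ge0 _ _.
have cm m : c m ^+ (2 * q.+2) = m%:R by rewrite exprn_powR_invn.
pose L := 1 + E * (3 + K) ^+ q.
have L0 : 0 < L by rewrite ltr_pwDl // mulr_ge0 // exprn_ge0 // addr_ge0.
exists (fun m => c m / L), (fun eps => Num.min eps 1); split.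
  by apply: powR_nat_cvgy; rewrite ?invr_gt0 ?ltr0n.
split=> [eps eps0|m W00 W10]; first by rewrite lt_min eps0 ltr01.
set M := 1 + K * c m.
exists (~` large_weights Z m M); split; first exact/measurableC/measurable_large_weights.
split.
  apply: (large_weights_prob mZ idZ (a := q.+2)); first by rewrite ltr_pwDl ?mulr_ge0.
  by rewrite SE -EFinM lee_fin moment_budget.
move=> w /not_large_weightsP smallw eps eps0 W0 W1 /= d0 d1 x /TX xX.
have eta01 : 0 <= Num.min eps 1 <= 1 by rewrite le_min ge_min lexx orbT ler01 (ltW eps0).
apply: (grad_diff_norm_le E0 K0 gradE (c0 m) (cm m) eta01 _ xX _ _ d0 d1).
- by rewrite ge_min lexx.
- by move=> i; split; apply: smallw (ltn_ord i).
- by rewrite lexx andbT !mulr_ge0 ?invr_ge0 ?(ltW L0) //; case/andP: eta01.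
Qed.
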